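(* Let $k$ be a field, $Q,q\in k^\times$, $n,d\geq1$, and consider the right action of $\mathcal H^B_{Q,q}(d)$ on $V_n^{\otimes d}$. For each $1\le i\le d$, every eigenvalue of $K_i=T_{i-1}\cdots T_1T_0T_1\cdots T_{i-1}$ acting on $V_n^{\otimes d}$ is of the form $-Qq^{2j}$ or $Q^{-1}q^{2j}$ for some integer $j$ with $|j|<i$.
   Context: $\mathcal H^B_{Q,q}(d)$ is the $k$-algebra generated by $T_0,\dots,T_{d-1}$ with relations $(T_0+Q)(T_0-Q^{-1})=0$; $(T_i+q)(T_i-q^{-1})=0$ ($i>0$); $T_iT_{i+1}T_i=T_{i+1}T_iT_{i+1}$ ($i>0$); $T_0T_1T_0T_1=T_1T_0T_1T_0$; $T_iT_j=T_jT_i$ ($|i-j|>1$). For $n=2r$ let $\mathbb I_n=\{-\tfrac{2r-1}{2},\dots,-\tfrac12,\tfrac12,\dots,\tfrac{2r-1}{2}\}$ and for $n=2r+1$ let $\mathbb I_n=\{-r,\dots,0,\dots,r\}$. $V_n$ is the $k$-vector space with basis $\{v_i: i\in\mathbb I_n\}$. Define $R_q:V_n\otimes V_n\to V_n\otimes V_n$ by $v_i\otimes v_j\mapsto q^{-1}v_i\otimes v_j$ if $i=j$, $v_j\otimes v_i$ if $i<j$, $v_j\otimes v_i+(q^{-1}-q)v_i\otimes v_j$ if $i>j$; and $K_Q:V_n\to V_n$ by $v_i\mapsto Q^{-1}v_i$ if $i=0$, $v_{-i}$ if $i>0$, $v_{-i}+(Q^{-1}-Q)v_i$ if $i<0$.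 The right action of $\mathcal H^B_{Q,q}(d)$ on $V_n^{\otimes d}$ is given by letting $T_i$ ($i>0$) act as $R_q$ on tensor factors $i,i+1$ (identity elsewhere) and $T_0$ act as $K_Q$ on the first tensor factor (identity elsewhere). *)

From HB Require Import structures.
From mathcomp Require Import all_boot all_order all_algebra.
Set Implicit Arguments. Unset Strict Implicit. Unset Printing Implicit Defensive.
Import Order.TTheory GRing.Theory Num.Theory.
Local Open Scope ring_scope.

(* Encoding of the index set I_n: the ordinal a : 'I_n stands for the
   (half-)integer a - (n-1)/2.  Thus the order on I_n is the order on 'I_n,
   the sign of a - (n-1)/2 is the sign of 2a - (n-1), and negation i |-> -i
   is a |-> n-1-a. *)
(* Basis of V_n^{\otimes d}: words x : 'I_d -> 'I_n, x = v_{x 0} (x) ... (x) v_{x (d-1)}. *)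
Definition word (n d : nat) := {ffun 'I_d -> 'I_n}.

Section Ops.
Variables (k : fieldType) (Q q : k) (n d : nat).

(* the letter at 0-based position p (as a natural number; 0 if p >= d,
   which never happens for the positions used below) *)
Definition letter (x : word n d) (p : nat) : nat :=
  oapp (fun t : 'I_d => nat_of_ord (x t)) 0%N (insub p).

Definition swapw (p p' : nat) (x : word n d) : word n d :=
  [ffun t : 'I_d => if nat_of_ord t == p then insubd (x t) (letter x p')
                    else if nat_of_ord t == p' then insubd (x t) (letter x p)
                    else x t].

Definition setw (p : nat) (b : nat) (x : word n d) : word n d :=
  [ffun t : 'I_d => if nat_of_ord t == p then insubd (x t) b else x t].

Definition R_coef (p p' : nat) (x w : word n d) : k :=
  let a := letter x p in let b := letter x p' in
  if a == b then (if w == x then q^-1 else 0)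
  else if (a < b)%N then (if w == swapw p p' x then 1 else 0)
  else (if w == swapw p p' x then 1 else 0)
       + (if w == x then q^-1 - q else 0).

(* coefficient of basis word w in K_Q applied to the factor at position p0 of x;
   letter value a encodes the index a - (n-1)/2: it is 0 iff 2a = n-1, positive
   iff 2a > n-1, and its negative is encoded by n-1-a. *)
Definition K_coef (p0 : nat) (x w : word n d) : k :=
  let a := letter x p0 in
  if (a.*2 == n.-1)%N then (if w == x then Q^-1 else 0)
  else if (n.-1 < a.*2)%N then (if w == setw p0 (n.-1 - a) x then 1 else 0)
  else (if w == setw p0 (n.-1 - a) x then 1 else 0)
       + (if w == x then Q^-1 - Q else 0).

Definition N := #|{: word n d}|.

Definition mx_of (f : word n d -> word n d -> k) : 'M[k]_N :=
  \matrix_(r, c) f (enum_val r) (enum_val c).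

(* Matrix of the action of T_j on V_n^{\otimes d}, acting on ROW vectors
   (right action): entry (x, w) is the coefficient of basis w in v_x .
   T_0 acts as K_Q on the first factor; T_j (j > 0) acts as R_q on the
   factors j, j+1 (1-based), i.e. 0-based positions j-1, j. *)
Definition T_mx (j : nat) : 'M[k]_N :=
  mx_of (fun x w =>
    if j is j'.+1 then R_coef j' j x w
    else K_coef 0 x w).

Definition K_mx (i : nat) : 'M[k]_N :=
  foldl (fun M j => T_mx j *m M *m T_mx j) (T_mx 0) (iota 1 i.-1).

End Ops.

(* The matrices T_j of the action satisfy the defining relations of the type B Hecke
   algebra, and the bound holds for the Jucys-Murphy elements K_i of any matrices
   satisfying them.  If T^2 = (q^-1 - q) T + 1 and X commutes with Y = T X T, the
   commutator phi = T X - X T satisfies phi X = Y phi and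
   phi^2 = - (X - q^2 Y) (X - q^-2 Y).  Hence p(X) = 0, for p = prod_(c in s) (x - c),
   gives p(Y) (X - q^2 Y) (X - q^-2 Y) = 0.  To the right of a factor W with
   W X = b W Y, X may be replaced by b Y in p(X) = 0; doing this with b = q^-2 and then
   b = q^2 shows that Y is annihilated by the product over s, q^2 s and q^-2 s.
   Since (K_1 + Q) (K_1 - Q^-1) = 0 and K_(i+1) = T_i K_i T_i commutes with K_i by the
   braid relations, induction on i gives an annihilating product of K_i whose roots
   are the values -Q q^(2j), Q^-1 q^(2j) with |j| < i. *)

From HB Require Import structures.
From mathcomp Require Import all_boot all_order all_algebra.
From mathcomp Require Import ring zify.
Import Order.TTheory GRing.Theory Num.Theory.
Local Open Scope ring_scope.
Set Implicit Arguments. Unset Strict Implicit. Unset Printing Implicit Defensive.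

(** * Annihilating products of matrices *)

Section AnnihilatingProducts.
Variables (k : fieldType) (m : nat).
Implicit Types (A W X Y Z : 'M[k]_m) (s : seq k).

(* [scalar_mxC] and [mul_scalar_mx], restated with the ring product of ['M_m]
   so that they can be used for rewriting. *)
Lemma scalar_mx_comm A c : GRing.comm A c%:M.
Proof. exact: scalar_mxC. Qed.

Lemma scalar_mulE c A : c%:M * A = c *: A.
Proof. exact: mul_scalar_mx. Qed.

Lemma comm_sub_scalar W X c : GRing.comm W X -> GRing.comm W (X - c%:M).
Proof. by move=> cWX; apply: commrB; last exact: scalar_mx_comm. Qed.

Lemma comm_prod_sub W X s :
  GRing.comm W X -> GRing.comm W (\prod_(c <- s) (X - c%:M)).
Proof. by move=> cWX; apply: commr_prod => c _; apply: comm_sub_scalar. Qed.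

Lemma mulr_scalarA A c B : A * (c%:M * B) = c%:M * (A * B).
Proof. by rewrite mulrA scalar_mx_comm mulrA. Qed.

Lemma prod_sub_intertwine A X Y s : A * X = Y * A ->
  A * \prod_(c <- s) (X - c%:M) = \prod_(c <- s) (Y - c%:M) * A.
Proof.
move=> AX; elim: s => [|c s IHs]; first by rewrite !big_nil mulr1 mul1r.
by rewrite !big_cons mulrA mulrBr AX scalar_mx_comm -mulrBl -!mulrA IHs.
Qed.

Lemma prod_sub_transfer W X Z s : GRing.comm X Z -> GRing.comm W X ->
  W * Z = W * X -> W * \prod_(c <- s) (Z - c%:M) = W * \prod_(c <- s) (X - c%:M).
Proof.
move=> cXZ; elim: s W => [|c s IHs] W cWX WZ; first by rewrite !big_nil.
have cXcX : GRing.comm X (X - c%:M) by apply: comm_sub_scalar.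
have cZXc : GRing.comm Z (X - c%:M) by apply/comm_sub_scalar/commr_sym.
rewrite !big_cons !mulrA mulrBr WZ -mulrBr.
apply: IHs; first exact/commr_sym/commrM/cXcX/commr_sym.
by rewrite -!mulrA -cZXc !mulrA WZ -!mulrA cXcX.
Qed.

Lemma prod_sub_scale b Y s : b != 0 ->
  \prod_(c <- s) (b%:M * Y - c%:M) =
    (b ^+ size s)%:M * \prod_(c <- map ( *%R b^-1) s) (Y - c%:M).
Proof.
move=> b0; elim: s => [|c s IHs]; first by rewrite !big_nil mulr1.
rewrite !big_cons.
have -> : b%:M * Y - c%:M = b%:M * (Y - (b^-1 * c)%:M).
  by rewrite mulrBr -rmorphM /= mulrA divff // mul1r.
rewrite IHs !mulrA -(mulrA _ _ (b ^+ _)%:M) scalar_mx_comm !mulrA.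
by rewrite -rmorphM -exprS.
Qed.

Lemma eigenvalue_prod_sub A s a :
  \prod_(c <- s) (A - c%:M) = 0 -> eigenvalue A a -> a \in s.
Proof.
move=> As0 /eigenvalueP [v Av v0].
have vAs : v *m \prod_(c <- s) (A - c%:M) = (\prod_(c <- s) (a - c)) *: v.
  elim: s {As0} => [|c s IHs]; first by rewrite !big_nil mulmx1 scale1r.
  rewrite !big_cons mulmxA mulmxBr Av mul_mx_scalar -scalerBl -scalemxAl IHs.
  by rewrite scalerA.
move: vAs; rewrite As0 mulmx0 => /esym/eqP; rewrite scaler_eq0 (negbTE v0) orbF.
by rewrite prodf_seq_eq0 => /hasP [c cs]; rewrite subr_eq0 => /eqP ->.
Qed.

Lemma prod_sub_shift W X Y b s : b != 0 -> GRing.comm X Y -> GRing.comm W X ->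
  W * (X - b^-1%:M * Y) = 0 -> \prod_(c <- s) (X - c%:M) = 0 ->
  W * \prod_(c <- map ( *%R b) s) (Y - c%:M) = 0.
Proof.
move=> b0 cXY cWX /eqP; rewrite mulrBr subr_eq0 => /eqP WXY Xs0.
have cXbY := commrM (scalar_mx_comm X b^-1) cXY.
have := prod_sub_transfer s cXbY cWX (esym WXY).
rewrite Xs0 mulr0 prod_sub_scale ?invr_eq0 // invrK mulrA scalar_mx_comm.
rewrite -mulrA scalar_mulE => /eqP.
by rewrite scaler_eq0 expf_eq0 invr_eq0 (negbTE b0) andbF => /eqP.
Qed.

End AnnihilatingProducts.

Section HeckeConjugation.
Variables (k : fieldType) (m : nat) (X Y T : 'M[k]_m) (q : k).
Hypotheses (q0 : q != 0) (T_quad : T * T = (q^-1 - q)%:M * T + 1)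
  (def_Y : Y = T * X * T) (commXY : GRing.comm X Y).

Let C : 'M[k]_m := (q^-1 - q)%:M.
Let Tinv := T - C.

Let mulTTinv : T * Tinv = 1.
Proof. by rewrite mulrBr T_quad scalar_mx_comm addrAC subrr add0r. Qed.
Let mulTinvT : Tinv * T = 1.
Proof. by rewrite mulrBl T_quad addrAC subrr add0r. Qed.
Let mulTX : T * X = Y * Tinv.
Proof. by rewrite def_Y -mulrA mulTTinv mulr1. Qed.
Let mulXT : X * T = Tinv * Y.
Proof. by rewrite def_Y !mulrA mulTinvT mul1r. Qed.

Lemma commutator_intertwine : (T * X - X * T) * X = Y * (T * X - X * T).
Proof.
have phiE : T * X - X * T = Y * T - T * Y.
  by rewrite mulTX mulXT /Tinv mulrBr mulrBl (scalar_mx_comm Y) opprB addrA subrK.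
rewrite {1}phiE mulrBl mulrBr !mulrA; congr (_ - _).
by rewrite -(mulrA T) -{1}commXY def_Y !mulrA.
Qed.

Lemma commutator_sqr : (T * X - X * T) * (T * X - X * T) =
  (2 + (q^-1 - q) ^+ 2)%:M * (X * Y) - X * X - Y * Y.
Proof.
have mulTinv2 : Tinv * Tinv = 1 - C * Tinv by rewrite {1}/Tinv mulrBl mulTTinv.
have TXTX : T * X * (T * X) = X * Y by rewrite mulrA -def_Y commXY.
have XTXT : X * T * (X * T) = X * Y by rewrite def_Y !mulrA.
have YTinvY : Y * Tinv * Y = X * Y * T by rewrite -mulrA -mulXT mulrA -commXY.
have TXXT : T * X * (X * T) = Y * Y - C * (X * Y * T).
  rewrite mulTX mulXT mulrA -(mulrA Y Tinv Tinv) mulTinv2 mulrBr mulr1 mulrBl.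
  by rewrite (mulrA Y C) (scalar_mx_comm Y) -(mulrA C) -(mulrA C) YTinvY.
have XTX : X * T * X = X * Y * T - C * (X * Y).
  by rewrite -mulrA mulTX mulrA /Tinv mulrBr scalar_mx_comm.
have XTTX : X * T * (T * X) = C * (X * Y * T) - C * (C * (X * Y)) + X * X.
  rewrite -mulrA (mulrA T) T_quad mulrDl mul1r mulrDr -(mulrA C) (mulrA X C).
  by rewrite (scalar_mx_comm X) -(mulrA C) (mulrA X T X) XTX mulrBr.
rewrite mulrBr !mulrBl TXTX XTXT TXXT XTTX /C !scalar_mulE.
by apply/matrixP => i j; rewrite !mxE; ring.
Qed.

Lemma prod_sub_conj_eq0 s : \prod_(c <- s) (X - c%:M) = 0 ->
  \prod_(c <- s ++ map ( *%R (q ^+ 2)) s ++ map ( *%R (q ^+ 2)^-1) s) (Y - c%:M) = 0.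
Proof.
move=> Xs0; set PY := \prod_(c <- s) (Y - c%:M).
have q20 : q ^+ 2 != 0 by rewrite expf_neq0.
have PYphi2 : PY * ((T * X - X * T) * (T * X - X * T)) = 0.
  by rewrite mulrA -(prod_sub_intertwine _ commutator_intertwine) Xs0 mulr0 mul0r.
have factorE : (2 + (q^-1 - q) ^+ 2)%:M * (X * Y) - X * X - Y * Y =
    - ((X - (q ^+ 2)%:M * Y) * (X - (q ^+ 2)^-1%:M * Y)).
  rewrite mulrBl !mulrBr -!mulrA !(mulr_scalarA X) !(mulr_scalarA Y) -commXY.
  rewrite !scalar_mulE.
  move: (X * X) (X * Y) (Y * Y) => XX XY YY.
  by apply/matrixP => i j; rewrite !mxE; field.
move: PYphi2; rewrite commutator_sqr factorE mulrN => /eqP.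
rewrite oppr_eq0 mulrA => /eqP PYX0.
have cPYX : GRing.comm (PY * (X - (q ^+ 2)%:M * Y)) X.
  apply/commr_sym/commrM; first exact/comm_prod_sub/commXY.
  exact: commrB (commrM (scalar_mx_comm X _) commXY).
have := prod_sub_shift q20 commXY cPYX PYX0 Xs0.
set P2 := \prod_(c <- _) _ => PYXP2.
have cXqY : GRing.comm (X - (q ^+ 2)%:M * Y) P2.
  apply/comm_prod_sub/commr_sym.
  exact: commrB (commr_sym commXY) (commrM (scalar_mx_comm Y _) (commr_refl Y)).
have PYP2X : PY * P2 * (X - (q ^+ 2)^-1^-1%:M * Y) = 0.
  by rewrite invrK -mulrA -cXqY mulrA PYXP2.
have cPYP2 : GRing.comm (PY * P2) X.
  by apply/commr_sym/commrM; apply/comm_prod_sub/commXY.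
have := prod_sub_shift (invr_neq0 q20) commXY cPYP2 PYP2X Xs0.
by rewrite !big_cat /= mulrA.
Qed.

End HeckeConjugation.

(** * Jucys-Murphy elements *)

Section JucysMurphy.
Variables (k : fieldType) (m : nat) (t : nat -> 'M[k]_m) (d : nat) (Q q : k).
Hypothesis q0 : q != 0.
Hypothesis quad0 : (t 0 + Q%:M) * (t 0 - Q^-1%:M) = 0.
Hypothesis quadS : forall j, (0 < j < d)%N -> t j * t j = (q^-1 - q)%:M * t j + 1.
Hypothesis braid0 : (1 < d)%N -> t 0 * t 1 * t 0 * t 1 = t 1 * t 0 * t 1 * t 0.
Hypothesis braidS : forall j, (0 < j)%N -> (j.+1 < d)%N ->
  t j * t j.+1 * t j = t j.+1 * t j * t j.+1.
Hypothesis commF : forall j l, (j.+1 < l < d)%N -> GRing.comm (t j) (t l).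

(* [K_mx Q q n d i] is [jm (T_mx Q q n d) i]. *)
Definition jm i := foldl (fun M j => t j * M * t j) (t 0) (iota 1 i.-1).

Lemma jmS i : (0 < i)%N -> jm i.+1 = t i * jm i * t i.
Proof.
case: i => // i _.
have iotaS : iota 1 i.+1 = rcons (iota 1 i) i.+1 by rewrite -cats1 -{1}(addn1 i) iotaD.
by rewrite /jm [i.+2.-1]/= iotaS foldl_rcons.
Qed.

Lemma jm_comm_far i l : (0 < i)%N -> (i < l < d)%N -> GRing.comm (jm i) (t l).
Proof.
elim: i => // i IHi _ /andP [il ld].
case: i IHi il => [|i] IHi il; first by apply: commF; rewrite il.
have til : GRing.comm (t i.+1) (t l) by apply: commF; rewrite il.
rewrite jmS //; apply/commr_sym/commrM; [apply/commrM|]; apply/commr_sym => //.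
by apply: IHi => //; rewrite ltnW.
Qed.

Lemma jm_comm_next i : (0 < i < d)%N -> GRing.comm (jm i) (jm i.+1).
Proof.
elim: i => // i IHi /andP [_ id].
case: i IHi id => [|i] IHi id.
  by rewrite /GRing.comm (jmS (i := 1)) // !mulrA [jm 1]/= braid0.
have := IHi (ltnW id).
rewrite /GRing.comm (jmS (i := i.+2)) // (jmS (i := i.+1)) // !mulrA.
set a := t i.+1; set b := t i.+2; set L := jm i.+1 => ih.
have br0 : a * b * a = b * a * b by apply: braidS.
have br A : A * a * b * a = A * b * a * b.
  by rewrite -!mulrA; congr (_ * _); rewrite !mulrA br0.
have Lb A : A * L * b = A * b * L.
  by rewrite -!mulrA jm_comm_far //= ltnSn.
have {}ih A : A * L * a * L * a = A * a * L * a * L.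
  by rewrite -!mulrA; congr (_ * _); rewrite !mulrA ih.
rewrite (br (a * L)) (Lb a) -(Lb (a * b * L * a)) -(br (a * b * L * a * L)).
rewrite (ih (a * b)) br0 -(Lb (b * a)) (Lb (b * a * L * b * a)).
by rewrite -(br (b * a * L)).
Qed.

Definition jm_spectrum i (c : k) := exists j : int, (`|j| < i)%N /\
  (c = - Q * q ^ (2 * j) \/ c = Q^-1 * q ^ (2 * j)).

Lemma jm_spectrumS i c : jm_spectrum i c -> jm_spectrum i.+1 c.
Proof. by case=> j [ji cj]; exists j; split => //; apply: ltnW. Qed.

Lemma jm_spectrum_shift i c (e : int) : `|e|%N = 1%N ->
  jm_spectrum i c -> jm_spectrum i.+1 (q ^ (2 * e) * c).
Proof.
move=> e1 [j [ji cj]]; exists (j + e); split; first by lia.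
by rewrite mulrDr expfzDr ?mulf_neq0 // mulrC; case: cj => ->; [left|right]; ring.
Qed.

Lemma jm_annihilated i : (0 < i <= d)%N ->
  exists2 s, (forall c, c \in s -> jm_spectrum i c) & \prod_(c <- s) (jm i - c%:M) = 0.
Proof.
elim: i => // i IHi /andP [_ id].
case: i IHi id => [|i] IHi id.
  exists [:: - Q; Q^-1].
    move=> c; rewrite !inE => /orP [] /eqP ->; exists 0; split => //.
      by left; rewrite mulr0 expr0z mulr1.
    by right; rewrite mulr0 expr0z mulr1.
  by rewrite !big_cons big_nil mulr1 rmorphN opprK.
have [s sspec jm0] := IHi (ltnW id).
exists (s ++ map ( *%R (q ^+ 2)) s ++ map ( *%R (q ^+ 2)^-1) s).
  move=> c; rewrite !mem_cat => /or3P [cs|/mapP [a sa ->]|/mapP [a sa ->]].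
  - exact/jm_spectrumS/sspec.
  - by rewrite -[q ^+ 2]/(q ^ (2 * 1)); apply/jm_spectrum_shift/sspec.
  - rewrite -[q ^+ 2]/(q ^ (2 * 1)) invr_expz -mulrN.
    by apply/jm_spectrum_shift/sspec.
rewrite jmS //; apply: prod_sub_conj_eq0 => //; first by apply: quadS; rewrite id.
by rewrite /GRing.comm -jmS // jm_comm_next.
Qed.

Lemma jm_eigenvalue i a : (0 < i <= d)%N -> eigenvalue (jm i) a -> jm_spectrum i a.
Proof.
by case/jm_annihilated => s sspec jm0 /(eigenvalue_prod_sub jm0); apply: sspec.
Qed.

End JucysMurphy.

(** * The action on tensor words *)

Section Words.
Variables (n d : nat).
Hypothesis n_gt0 : (0 < n)%N.
Implicit Types x y : word n d.

Lemma letter_ord x (i : 'I_d) : letter x i = x i.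
Proof. by rewrite /letter valK. Qed.

Lemma letter_lt x p : (letter x p < n)%N.
Proof.
case: (ltnP p d) => pd; last by rewrite /letter insubF // ltnNge pd.
by rewrite -[p]/(val (Ordinal pd)) letter_ord.
Qed.

Lemma word_eq x y : (forall p, (p < d)%N -> letter x p = letter y p) -> x = y.
Proof. by move=> xy; apply/ffunP => i; apply: val_inj; rewrite /= -!letter_ord xy. Qed.

Lemma letter_setw p v x r : (r < d)%N -> (v < n)%N ->
  letter (setw p v x) r = if r == p then v else letter x r.
Proof.
move=> rd vn; rewrite -[r]/(val (Ordinal rd)) !letter_ord ffunE /=.
by case: ifP => // _; rewrite val_insubd vn.
Qed.

Lemma letter_swapw p p' x r : (r < d)%N -> letter (swapw p p' x) r =
  if r == p then letter x p' else if r == p' then letter x p else letter x r.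
Proof.
move=> rd; rewrite -[r]/(val (Ordinal rd)) !letter_ord ffunE /=.
by case: ifP => _; [|case: ifP => _ //]; rewrite val_insubd letter_lt.
Qed.

Ltac word_ext :=
  apply: word_eq => ? ?; rewrite ?(letter_swapw, letter_setw) //;
  repeat case: eqP => //; lia.

Lemma setw_letter p x : setw p (letter x p) x = x.
Proof.
by apply: word_eq => r rd; rewrite letter_setw ?letter_lt //; case: eqP => [->|].
Qed.

Lemma setw_setw p u v x : (u < n)%N -> (v < n)%N -> setw p v (setw p u x) = setw p v x.
Proof. by move=> un vn; word_ext. Qed.

Lemma swapw_setw2 p p' u v x : p != p' -> (p < d)%N -> (p' < d)%N ->
  (u < n)%N -> (v < n)%N -> swapw p p' (setw p u (setw p' v x)) = setw p v (setw p' u x).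
Proof. by move=> pp' pd p'd un vn; word_ext. Qed.

Lemma swapw_setw p p' r w x : r != p -> r != p' -> (p < d)%N -> (p' < d)%N ->
  (w < n)%N -> swapw p p' (setw r w x) = setw r w (swapw p p' x).
Proof. by move=> rp rp' pd p'd wn; word_ext. Qed.

End Words.

Section BasisAction.
Variables (k : fieldType) (Q q : k) (n d : nat).
Local Notation T := (T_mx Q q n d).

Definition bvec (x : word n d) : 'rV[k]_(N n d) := delta_mx 0 (enum_rank x).

Lemma matrix_bvecP (A B : 'M[k]_(N n d)) :
  (forall x, bvec x *m A = bvec x *m B) -> A = B.
Proof.
move=> AB; apply/row_matrixP => i; rewrite !rowE.
by have := AB (enum_val i); rewrite /bvec enum_valK.
Qed.

Lemma bvec_mx_of f x c : (bvec x *m mx_of f) 0 c = f x (enum_val c).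
Proof. by rewrite /bvec -rowE !mxE enum_rankK. Qed.

Definition R_diag (u v : nat) : k :=
  if u == v then q^-1 else if (u < v)%N then 0 else q^-1 - q.
Definition K_diag (u : nat) : k :=
  if (u.*2 == n.-1)%N then Q^-1 else if (n.-1 < u.*2)%N then 0 else Q^-1 - Q.

Lemma bvec_mulR j x : bvec x *m T j.+1 =
  (letter x j != letter x j.+1)%:R *: bvec (swapw j j.+1 x) +
  R_diag (letter x j) (letter x j.+1) *: bvec x.
Proof.
apply/rowP => c; rewrite bvec_mx_of !mxE eqxx /R_coef /R_diag.
rewrite !(can2_eq enum_valK enum_rankK).
by case: (letter x j == letter x j.+1); case: (letter x j < letter x j.+1)%N;
  case: (c == enum_rank (swapw j j.+1 x)); case: (c == enum_rank x); rewrite /=; ring.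
Qed.

Lemma bvec_mulK x : bvec x *m T 0 =
  ((letter x 0).*2 != n.-1)%:R *: bvec (setw 0 (n.-1 - letter x 0) x) +
  K_diag (letter x 0) *: bvec x.
Proof.
apply/rowP => c; rewrite bvec_mx_of !mxE eqxx /K_coef /K_diag.
rewrite !(can2_eq enum_valK enum_rankK).
by case: ((letter x 0).*2 == n.-1)%N; case: (n.-1 < (letter x 0).*2)%N;
  case: (c == enum_rank (setw 0 (n.-1 - letter x 0) x)); case: (c == enum_rank x);
  rewrite /=; ring.
Qed.

End BasisAction.

Section HeckeRelations.
Variables (k : fieldType) (Q q : k) (n d : nat).
Hypotheses (n_gt0 : (0 < n)%N) (Q0 : Q != 0) (q0 : q != 0).
Local Notation T := (T_mx Q q n d).
Local Notation e := (@bvec k n d).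

Ltac decide_bool c := lazymatch c with
  | true => fail | false => fail
  | _ => first [ have -> : c by lia | have -> : c = false by lia ] end.

Ltac decide_ifs := repeat match goal with
  | |- context [if ?c then _ else _] => decide_bool c
  | |- context [nat_of_bool ?c] => decide_bool c end.

Ltac cmp_cases u v := case: (ltngtP u v) => [?|?|?]; [| | subst].

Ltac flip_cases a :=
  case: (ltngtP a.*2 n.-1) => ?; last have -> : (n.-1 - a = a)%N by lia.

(* Once the letters have been compared, equal words are syntactically equal,
   so the identity holds with arbitrary row vectors in place of the [bvec]s. *)
Ltac bvec_field :=
  repeat match goal with |- context [@bvec _ _ _ ?y] => move: (@bvec _ _ _ y) => ? end;
  rewrite /= ?scale0r ?scale1r ?add0r ?addr0; apply/rowP => ?; rewrite ?mxE;
  field; by rewrite ?Q0 ?q0.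

Lemma T_quadK : (0 < d)%N -> (T 0 + Q%:M) * (T 0 - Q^-1%:M) = 0.
Proof.
move=> d0; apply: matrix_bvecP => x; rewrite mulmx0.
have -> : x = setw 0 (letter x 0) x by rewrite setw_letter.
move: (letter x 0) (letter_lt n_gt0 x 0) => u un.
have act a : (a < n)%N -> e (setw 0 a x) *m T 0 =
    (a.*2 != n.-1)%:R *: e (setw 0 (n.-1 - a) x) + K_diag Q n a *: e (setw 0 a x).
  by move=> an; rewrite bvec_mulK letter_setw // eqxx setw_setw //; lia.
have un' : (n.-1 - u < n)%N by lia.
have flipu : (n.-1 - (n.-1 - u) = u)%N by lia.
(* Hiding [T_mx] keeps the rewriting below from unfolding it. *)
rewrite mulmxA mulmxBr mulmxDr !mul_mx_scalar; move: (T 0) act => T0 act.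
do 2 rewrite ?mulmxDl -?scalemxAl ?act ?flipu.
all: try assumption.
rewrite /K_diag; clear act; flip_cases u.
all: by decide_ifs; bvec_field.
Qed.

Lemma T_quadR j : (0 < j < d)%N -> T j * T j = (q^-1 - q)%:M * T j + 1.
Proof.
case: j => // p /andP [_ pd]; have pd' := ltnW pd.
apply: matrix_bvecP => x.
have -> : x = setw p (letter x p) (setw p.+1 (letter x p.+1) x) by rewrite !setw_letter.
move: (letter x p) (letter x p.+1) (letter_lt n_gt0 x p) (letter_lt n_gt0 x p.+1)
  => u v un vn.
have act a b : (a < n)%N -> (b < n)%N -> e (setw p a (setw p.+1 b x)) *m T p.+1 =
    (a != b)%:R *: e (setw p b (setw p.+1 a x)) +
    R_diag q a b *: e (setw p a (setw p.+1 b x)).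
  move=> an bn; rewrite bvec_mulR !letter_setw //; decide_ifs.
  by rewrite swapw_setw2 //; lia.
rewrite mulmxDr mulmx1 !mulmxA mul_mx_scalar -scalemxAl; move: (T p.+1) act => T1 act.
do 2 rewrite ?act ?mulmxDl -?scalemxAl.
all: try assumption.
rewrite /R_diag; clear act.
by case: (ltngtP u v) => [uv|uv|<-]; decide_ifs; bvec_field.
Qed.

Lemma T_braidK : (1 < d)%N -> T 0 * T 1 * T 0 * T 1 = T 1 * T 0 * T 1 * T 0.
Proof.
move=> d1; have d0 := ltnW d1; apply: matrix_bvecP => x.
have -> : x = setw 0 (letter x 0) (setw 1 (letter x 1) x) by rewrite !setw_letter.
move: (letter x 0) (letter x 1) (letter_lt n_gt0 x 0) (letter_lt n_gt0 x 1) => u v un vn.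
have actK a b : (a < n)%N -> (b < n)%N -> e (setw 0 a (setw 1 b x)) *m T 0 =
    (a.*2 != n.-1)%:R *: e (setw 0 (n.-1 - a) (setw 1 b x)) +
    K_diag Q n a *: e (setw 0 a (setw 1 b x)).
  by move=> an bn; rewrite bvec_mulK letter_setw // eqxx setw_setw //; lia.
have actR a b : (a < n)%N -> (b < n)%N -> e (setw 0 a (setw 1 b x)) *m T 1 =
    (a != b)%:R *: e (setw 0 b (setw 1 a x)) + R_diag q a b *: e (setw 0 a (setw 1 b x)).
  move=> an bn; rewrite bvec_mulR !letter_setw //; decide_ifs.
  by rewrite swapw_setw2 //; lia.
have [un' vn'] : (n.-1 - u < n)%N /\ (n.-1 - v < n)%N by lia.
have [flipu flipv] : (n.-1 - (n.-1 - u) = u)%N /\ (n.-1 - (n.-1 - v) = v)%N by lia.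
rewrite !mulmxA; move: (T 0) (T 1) actK actR => T0 T1 actK actR.
do 4 rewrite ?(actK, actR) ?mulmxDl -?scalemxAl ?flipu ?flipv.
all: try assumption.
rewrite /K_diag /R_diag; clear actK actR.
case: (ltngtP u v) => [?|?|<-]; try case: (ltngtP u (n.-1 - v)) => [?|?|?]; try subst u;
  rewrite ?flipv; try flip_cases u; try flip_cases v.
all: by try (exfalso; lia); decide_ifs; bvec_field.
Qed.

Lemma T_braidR j : (0 < j)%N -> (j.+1 < d)%N -> T j * T j.+1 * T j = T j.+1 * T j * T j.+1.
Proof.
case: j => // p _ pd; have pd' := ltnW pd; have pd'' := ltnW pd'.
apply: matrix_bvecP => x.
have -> : x = setw p (letter x p) (setw p.+1 (letter x p.+1) (setw p.+2 (letter x p.+2) x)).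
  by rewrite !setw_letter.
move: (letter x p) (letter x p.+1) (letter x p.+2) (letter_lt n_gt0 x p)
  (letter_lt n_gt0 x p.+1) (letter_lt n_gt0 x p.+2) => u v w un vn wn.
have act1 a b c : (a < n)%N -> (b < n)%N -> (c < n)%N ->
    e (setw p a (setw p.+1 b (setw p.+2 c x))) *m T p.+1 =
    (a != b)%:R *: e (setw p b (setw p.+1 a (setw p.+2 c x))) +
    R_diag q a b *: e (setw p a (setw p.+1 b (setw p.+2 c x))).
  move=> an bn cn; rewrite bvec_mulR !letter_setw //; decide_ifs.
  by rewrite swapw_setw2 //; lia.
have act2 a b c : (a < n)%N -> (b < n)%N -> (c < n)%N ->
    e (setw p a (setw p.+1 b (setw p.+2 c x))) *m T p.+2 =
    (b != c)%:R *: e (setw p a (setw p.+1 c (setw p.+2 b x))) +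
    R_diag q b c *: e (setw p a (setw p.+1 b (setw p.+2 c x))).
  move=> an bn cn; rewrite bvec_mulR !letter_setw //; decide_ifs.
  by rewrite swapw_setw ?swapw_setw2 //; lia.
rewrite !mulmxA; move: (T p.+1) (T p.+2) act1 act2 => T1 T2 act1 act2.
do 3 rewrite ?(act1, act2) ?mulmxDl -?scalemxAl.
all: try assumption.
rewrite /R_diag; clear act1 act2.
by cmp_cases u v; try cmp_cases v w; try cmp_cases u w;
  try (exfalso; lia); decide_ifs; bvec_field.
Qed.

Lemma T_commK r : (0 < r)%N -> (r.+1 < d)%N -> GRing.comm (T 0) (T r.+1).
Proof.
move=> r0 rd; have rd' := ltnW rd; have d0 := leq_ltn_trans (leq0n r) rd'.
apply: matrix_bvecP => x; rewrite /GRing.comm.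
have -> : x = setw 0 (letter x 0) (setw r (letter x r) (setw r.+1 (letter x r.+1) x)).
  by rewrite !setw_letter.
move: (letter x 0) (letter x r) (letter x r.+1) (letter_lt n_gt0 x 0)
  (letter_lt n_gt0 x r) (letter_lt n_gt0 x r.+1) => u v w un vn wn.
have actK a b c : (a < n)%N -> (b < n)%N -> (c < n)%N ->
    e (setw 0 a (setw r b (setw r.+1 c x))) *m T 0 =
    (a.*2 != n.-1)%:R *: e (setw 0 (n.-1 - a) (setw r b (setw r.+1 c x))) +
    K_diag Q n a *: e (setw 0 a (setw r b (setw r.+1 c x))).
  by move=> an bn cn; rewrite bvec_mulK letter_setw // eqxx setw_setw //; lia.
have actR a b c : (a < n)%N -> (b < n)%N -> (c < n)%N ->
    e (setw 0 a (setw r b (setw r.+1 c x))) *m T r.+1 =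
    (b != c)%:R *: e (setw 0 a (setw r c (setw r.+1 b x))) +
    R_diag q b c *: e (setw 0 a (setw r b (setw r.+1 c x))).
  move=> an bn cn; rewrite bvec_mulR !letter_setw //; decide_ifs.
  by rewrite swapw_setw ?swapw_setw2 //; lia.
have un' : (n.-1 - u < n)%N by lia.
rewrite !mulmxA; move: (T 0) (T r.+1) actK actR => T0 T1 actK actR.
do 2 rewrite ?(actK, actR) ?mulmxDl -?scalemxAl.
all: try assumption.
by bvec_field.
Qed.

Lemma T_commR p r : (p.+1 < r)%N -> (r.+1 < d)%N -> GRing.comm (T p.+1) (T r.+1).
Proof.
move=> pr rd; have rd' := ltnW rd.
have pd : (p.+1 < d)%N by lia.
have pd' := ltnW pd.
apply: matrix_bvecP => x; rewrite /GRing.comm.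
have -> : x = setw p (letter x p) (setw p.+1 (letter x p.+1)
    (setw r (letter x r) (setw r.+1 (letter x r.+1) x))) by rewrite !setw_letter.
move: (letter x p) (letter x p.+1) (letter x r) (letter x r.+1) (letter_lt n_gt0 x p)
  (letter_lt n_gt0 x p.+1) (letter_lt n_gt0 x r) (letter_lt n_gt0 x r.+1)
  => u v w z un vn wn zn.
have act1 a b c f : (a < n)%N -> (b < n)%N -> (c < n)%N -> (f < n)%N ->
    e (setw p a (setw p.+1 b (setw r c (setw r.+1 f x)))) *m T p.+1 =
    (a != b)%:R *: e (setw p b (setw p.+1 a (setw r c (setw r.+1 f x)))) +
    R_diag q a b *: e (setw p a (setw p.+1 b (setw r c (setw r.+1 f x)))).
  move=> an bn cn fn; rewrite bvec_mulR !letter_setw //; decide_ifs.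
  by rewrite swapw_setw2 //; lia.
have act2 a b c f : (a < n)%N -> (b < n)%N -> (c < n)%N -> (f < n)%N ->
    e (setw p a (setw p.+1 b (setw r c (setw r.+1 f x)))) *m T r.+1 =
    (c != f)%:R *: e (setw p a (setw p.+1 b (setw r f (setw r.+1 c x)))) +
    R_diag q c f *: e (setw p a (setw p.+1 b (setw r c (setw r.+1 f x)))).
  move=> an bn cn fn; rewrite bvec_mulR !letter_setw //; decide_ifs.
  by rewrite swapw_setw 1?swapw_setw ?swapw_setw2 //; lia.
rewrite !mulmxA; move: (T p.+1) (T r.+1) act1 act2 => T1 T2 act1 act2.
do 2 rewrite ?(act1, act2) ?mulmxDl -?scalemxAl.
all: try assumption.
by bvec_field.
Qed.

Lemma T_comm j l : (j.+1 < l < d)%N -> GRing.comm (T j) (T l).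
Proof.
case: l => // r /andP [jr rd].
by case: j jr => [|p] jr; [apply: T_commK | apply: T_commR].
Qed.

End HeckeRelations.

Theorem proposition2p5 (k : fieldType) (Q q : k) (n d : nat)
  (hQ : Q != 0) (hq : q != 0) (hn : (1 <= n)%N) (hd : (1 <= d)%N)
  (i : nat) (hi1 : (1 <= i)%N) (hid : (i <= d)%N) (a : k) :
  eigenvalue (K_mx Q q n d i) a ->
  exists j : int, (`|j|%N < i)%N /\
    (a = - Q * q ^ (2 * j) \/ a = Q^-1 * q ^ (2 * j)).
Proof.
apply: (jm_eigenvalue hq (T_quadK hn hQ hq hd) (T_quadR hn hQ hq)).
- exact: T_braidK.
- exact: T_braidR.
- exact: T_comm.
- by rewrite hi1 hid.
Qed.
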